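(* Assume that $p_t\geq 1/2$ for all integers $t\geq 1$. Then $\tilde c_t\leq 1/2\leq c_t$ holds for all integers $t\geq 1$.
   Context: $s(n)$ denotes the binary sum of digits of $n\ge0$. For $t\ge0$, $c_t$ (resp. $\tilde c_t$) is the asymptotic density of $\{n\ge0: s(n+t)\ge s(n)\}$ (resp. $\{n\ge 0: s(n+t)>s(n)\}$). Define numbers $\varphi(k,t)$ for $k\in\mathbb{Z}$ and integers $t\ge1$ by $\varphi(0,1)=1$, $\varphi(k,1)=0$ for $k\neq0$, and for $t\ge1$: $\varphi(k,2t)=\varphi(k,t)$, $\varphi(k,2t+1)=\frac12\varphi(k-1,t)+\frac12\varphi(k+1,t+1)$. Set $p_t=\sum_{k\geq 0}\varphi(k,t)$ (a finite sum, since $\varphi(k,t)=0$ for $k\ge s(t)$). *)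

From Stdlib Require Import Reals ZArith Arith Lia.
From Coquelicot Require Import Coquelicot.
Open Scope R_scope.

Fixpoint pos_s (p : positive) : nat :=
  match p with xH => 1%nat | xO q => pos_s q | xI q => S (pos_s q) end.
Definition s (n : nat) : nat :=
  match N.of_nat n with N0 => 0%nat | Npos p => pos_s p end.

Fixpoint count_upto (P : nat -> bool) (N : nat) : nat :=
  match N with
  | O => O
  | S m => (count_upto P m + (if P m then 1 else 0))%nat
  end.

(* proportion of m < N with P m; its limit (if any) is the asymptotic density *)
Definition freq (P : nat -> bool) (N : nat) : R := INR (count_upto P N) / INR N.

Definition ge_pred (t : nat) (n : nat) : bool := Nat.leb (s n) (s (n + t)).
Definition gt_pred (t : nat) (n : nat) : bool := Nat.ltb (s n) (s (n + t)).

(* phi(k,t) via fuel; every recursive call strictly decreases t, so fuel t suffices.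
   phi(0,1)=1, phi(k,1)=0 (k<>0), phi(k,2t)=phi(k,t),
   phi(k,2t+1)=1/2 phi(k-1,t) + 1/2 phi(k+1,t+1).  Value at t=0 is irrelevant (0). *)
Fixpoint phi_fuel (fuel : nat) (k : Z) (t : nat) : R :=
  match fuel with
  | O => 0
  | S f =>
      if Nat.leb t 1 then
        (if andb (Nat.eqb t 1) (Z.eqb k 0) then 1 else 0)
      else if Nat.even t then phi_fuel f k (Nat.div2 t)
      else / 2 * phi_fuel f (k - 1)%Z (Nat.div2 t)
           + / 2 * phi_fuel f (k + 1)%Z (S (Nat.div2 t))
  end.

Definition phi (k : Z) (t : nat) : R := phi_fuel t k t.

(* p_t = sum_{k >= 0} phi(k,t); phi(k,t)=0 for k >= s(t) and s(t) <= t,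
   so summing over 0 <= k <= t captures all terms. *)
Definition p (t : nat) : R := sum_f_R0 (fun k => phi (Z.of_nat k) t) t.

From Stdlib Require Import Reals ZArith Arith Lia Lra.
From Coquelicot Require Import Coquelicot.
Open Scope R_scope.

(* Split [0, 2^(L+1)) into even and odd numbers: the parity of [t] then turns
   the count of [m] with [s m <= s (m + t) + a] at level [L + 1] into counts at
   level [L] exactly as the recursion of [phi] turns a tail sum of [phi] at
   [2T] or [2T + 1] into tail sums at [T] and [T + 1]. By induction on [L], the
   proportion of [m < 2^L] with [s m <= s (m + t)] is at least
   [p (2^(L+1) + t) >= 1/2], and the proportion of [m] in [[2^L, 2^(L+1))] with
   [s (m + t) <= s m] is at least [p (2^(L+1) - t) >= 1/2]. The first bound
   gives [c_t >= 1/2] directly; the second says that the frequency [f] of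
   [s (m + t) > s m] satisfies [f (2^(L+1)) <= f (2^L) / 2 + 1/4], whence
   [c~_t <= c~_t / 2 + 1/4]. *)

Lemma s_double m : s (2 * m) = s m.
Proof. unfold s. rewrite Nnat.Nat2N.inj_double. now destruct (N.of_nat m). Qed.

Lemma s_succ_double m : s (2 * m + 1) = S (s m).
Proof.
  unfold s. rewrite Nat.add_1_r, Nnat.Nat2N.inj_succ_double.
  now destruct (N.of_nat m).
Qed.

Lemma phi_fuel_ext f g k T :
  (T <= f)%nat -> (T <= g)%nat -> phi_fuel f k T = phi_fuel g k T.
Proof.
  revert g k T; induction f as [|f IH]; intros [|g] k T Hf Hg;
    try (replace T with 0%nat by lia; reflexivity).
  cbn [phi_fuel]. destruct (Nat.leb_spec T 1) as [|HT]; [reflexivity|].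
  pose proof (Nat.div2_odd T) as HdT. rewrite <- Nat.negb_even in HdT.
  destruct (Nat.even T); cbn in HdT.
  - apply IH; lia.
  - f_equal; f_equal; apply IH; lia.
Qed.

Lemma phi_fuel_enough f k T : (T <= f)%nat -> phi_fuel f k T = phi k T.
Proof. intros; apply phi_fuel_ext; lia. Qed.

Lemma phi_one k : phi k 1 = if (k =? 0)%Z then 1 else 0.
Proof. reflexivity. Qed.

Lemma phi_double k T : (1 <= T)%nat -> phi k (2 * T) = phi k T.
Proof.
  intros HT. unfold phi at 1.
  replace (2 * T)%nat with (S (2 * T - 1)) at 1 by lia. cbn [phi_fuel].
  replace (2 * T <=? 1)%nat with false by (symmetry; apply Nat.leb_gt; lia).
  rewrite Nat.even_even, Nat.div2_double. apply phi_fuel_enough; lia.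
Qed.

Lemma phi_succ_double k T : (1 <= T)%nat ->
  phi k (2 * T + 1) = / 2 * phi (k - 1) T + / 2 * phi (k + 1) (S T).
Proof.
  intros HT. unfold phi at 1.
  replace (2 * T + 1)%nat with (S (2 * T)) at 1 by lia. cbn [phi_fuel].
  replace (2 * T + 1 <=? 1)%nat with false by (symmetry; apply Nat.leb_gt; lia).
  rewrite Nat.even_odd, Nat.add_1_r, Nat.div2_succ_double.
  now rewrite !phi_fuel_enough by lia.
Qed.

Lemma sum_indicator N (a : Z) :
  sum_f_R0 (fun i => if (Z.of_nat i =? a)%Z then 1 else 0) N
  = if ((0 <=? a) && (a <=? Z.of_nat N))%Z%bool then 1 else 0.
Proof.
  induction N as [|N IH]; cbn [sum_f_R0]; [|rewrite IH];
    repeat match goal with |- context [Z.eqb ?x ?y] => destruct (Z.eqb_spec x y)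
                         | |- context [Z.leb ?x ?y] => destruct (Z.leb_spec x y) end;
    cbn; first [lra | lia].
Qed.

Section PhiTail.

Variable N : nat.

Definition phi_tail (a : Z) (T : nat) : R := sum_f_R0 (fun i => phi (Z.of_nat i - a) T) N.

Lemma phi_tail_double a T : (1 <= T)%nat -> phi_tail a (2 * T) = phi_tail a T.
Proof. intros HT; apply sum_eq; intros; now apply phi_double. Qed.

Lemma phi_tail_succ_double a T : (1 <= T)%nat ->
  phi_tail a (2 * T + 1) = / 2 * phi_tail (a + 1) T + / 2 * phi_tail (a - 1) (S T).
Proof.
  intros HT; unfold phi_tail. rewrite !scal_sum, <- sum_plus.
  apply sum_eq; intros i _. rewrite phi_succ_double by exact HT.
  replace (Z.of_nat i - a - 1)%Z with (Z.of_nat i - (a + 1))%Z by lia.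
  replace (Z.of_nat i - a + 1)%Z with (Z.of_nat i - (a - 1))%Z by lia. lra.
Qed.

Lemma phi_tail_one a : phi_tail a 1 <= if (0 <=? a)%Z then 1 else 0.
Proof.
  unfold phi_tail.
  rewrite (sum_eq _ (fun i => if (Z.of_nat i =? a)%Z then 1 else 0)), sum_indicator.
  - destruct (0 <=? a)%Z, (a <=? Z.of_nat N)%Z; cbn; lra.
  - intros i _. rewrite phi_one.
    destruct (Z.eqb_spec (Z.of_nat i - a) 0), (Z.eqb_spec (Z.of_nat i) a); lia || reflexivity.
Qed.

Lemma phi_tail_two a : phi_tail a 2 <= if (0 <=? a)%Z then 1 else 0.
Proof. change 2%nat with (2 * 1)%nat. rewrite phi_tail_double by lia. apply phi_tail_one. Qed.

Lemma phi_tail_three a : phi_tail a 3 <= if (-1 <=? a)%Z then 1 else 0.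
Proof.
  change 3%nat with (2 * 1 + 1)%nat. rewrite phi_tail_succ_double by lia.
  pose proof (phi_tail_one (a + 1)). pose proof (phi_tail_two (a - 1)).
  destruct (Z.leb_spec 0 (a + 1)), (Z.leb_spec 0 (a - 1)), (Z.leb_spec (-1) a);
    lia || lra.
Qed.

End PhiTail.

Lemma p_eq_phi_tail T : p T = phi_tail T 0 T.
Proof. apply sum_eq; intros; now rewrite Z.sub_0_r. Qed.

Lemma count_upto_ext P Q n :
  (forall i, (i < n)%nat -> P i = Q i) -> count_upto P n = count_upto Q n.
Proof.
  induction n as [|n IH]; intros HPQ; cbn; [reflexivity|].
  rewrite IH, HPQ; [reflexivity | lia | intros; apply HPQ; lia].
Qed.

Lemma count_upto_add P n m :
  count_upto P (n + m) = (count_upto P n + count_upto (fun i => P (n + i)) m)%nat.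
Proof.
  induction m as [|m IH]; [rewrite Nat.add_0_r; cbn; lia|].
  rewrite Nat.add_succ_r; cbn. rewrite IH. lia.
Qed.

Lemma count_upto_double P Q R n :
  (forall i, P (2 * i)%nat = Q i) -> (forall i, P (2 * i + 1)%nat = R i) ->
  count_upto P (2 * n) = (count_upto Q n + count_upto R n)%nat.
Proof.
  intros HQ HR; induction n as [|n IH]; [reflexivity|].
  replace (2 * S n)%nat with (S (S (2 * n))) by lia. cbn [count_upto].
  rewrite IH, <- HQ, <- HR, Nat.add_1_r. lia.
Qed.

Lemma count_upto_negb P n : (count_upto P n + count_upto (fun i => negb (P i)) n)%nat = n.
Proof. induction n as [|n IH]; cbn; [reflexivity|]. destruct (P n); cbn; lia. Qed.

Definition s_le (a : Z) (m n : nat) : bool := (Z.of_nat (s m) <=? Z.of_nat (s n) + a)%Z.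

Lemma s_le_double a m n m' n' :
  m' = (2 * m)%nat -> n' = (2 * n)%nat -> s_le a m' n' = s_le a m n.
Proof. intros -> ->; unfold s_le; now rewrite !s_double. Qed.

Lemma s_le_succ_double a m n m' n' :
  m' = (2 * m + 1)%nat -> n' = (2 * n + 1)%nat -> s_le a m' n' = s_le a m n.
Proof.
  intros -> ->; unfold s_le; rewrite !s_succ_double.
  apply Bool.eq_iff_eq_true; rewrite !Z.leb_le; lia.
Qed.

Lemma s_le_double_succ_double a m n m' n' :
  m' = (2 * m)%nat -> n' = (2 * n + 1)%nat -> s_le a m' n' = s_le (a + 1) m n.
Proof.
  intros -> ->; unfold s_le; rewrite s_double, s_succ_double.
  apply Bool.eq_iff_eq_true; rewrite !Z.leb_le; lia.
Qed.

Lemma s_le_succ_double_double a m n m' n' :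
  m' = (2 * m + 1)%nat -> n' = (2 * n)%nat -> s_le a m' n' = s_le (a - 1) m n.
Proof.
  intros -> ->; unfold s_le; rewrite s_double, s_succ_double.
  apply Bool.eq_iff_eq_true; rewrite !Z.leb_le; lia.
Qed.

Lemma count_s_le_lb L t a N : (t <= 2 ^ L)%nat ->
  2 ^ L * phi_tail N a (2 * 2 ^ L + t)
  <= INR (count_upto (fun m => s_le a m (m + t)) (2 ^ L)).
Proof.
  revert t a; induction L as [|L IH]; intros t a Ht.
  - cbn in Ht |- *. destruct t as [|[|t]]; [| |lia].
    + change (s_le a 0 0) with (0 <=? 0 + a)%Z. pose proof (phi_tail_two N a).
      destruct (Z.leb_spec 0 a), (Z.leb_spec 0 (0 + a)); cbn [INR]; lia || lra.
    + change (s_le a 0 1) with (0 <=? 1 + a)%Z. pose proof (phi_tail_three N a).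
      destruct (Z.leb_spec (-1) a), (Z.leb_spec 0 (1 + a)); cbn [INR]; lia || lra.
  - rewrite Nat.pow_succ_r' in *; change (2 ^ S L) with (2 * 2 ^ L).
    pose proof (Nat.pow_nonzero 2 L ltac:(lia)).
    destruct (Nat.Even_or_Odd t) as [[u ->]|[u ->]].
    + rewrite (count_upto_double _ (fun m => s_le a m (m + u)) (fun m => s_le a m (m + u))),
        plus_INR by (intros; first [apply s_le_double; lia | apply s_le_succ_double; lia]).
      replace (2 * (2 * 2 ^ L) + 2 * u)%nat with (2 * (2 * 2 ^ L + u))%nat by lia.
      rewrite phi_tail_double by lia.
      pose proof (IH u a ltac:(lia)). lra.
    + rewrite (count_upto_double _ (fun m => s_le (a + 1) m (m + u))
                 (fun m => s_le (a - 1) m (m + (u + 1)))), plus_INR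
        by (intros; first [apply s_le_double_succ_double; lia | apply s_le_succ_double_double; lia]).
      replace (2 * (2 * 2 ^ L) + (2 * u + 1))%nat with (2 * (2 * 2 ^ L + u) + 1)%nat by lia.
      rewrite phi_tail_succ_double by lia.
      replace (S (2 * 2 ^ L + u)) with (2 * 2 ^ L + (u + 1))%nat by lia.
      pose proof (IH u (a + 1)%Z ltac:(lia)). pose proof (IH (u + 1)%nat (a - 1)%Z ltac:(lia)).
      lra.
Qed.

Lemma count_s_le_block_lb L t a N : (t <= 2 ^ L)%nat ->
  2 ^ L * phi_tail N a (2 * 2 ^ L - t)
  <= INR (count_upto (fun m => s_le a (2 ^ L + m + t) (2 ^ L + m)) (2 ^ L)).
Proof.
  revert t a; induction L as [|L IH]; intros t a Ht.
  - cbn in Ht |- *. destruct t as [|[|t]]; [| |lia].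
    + change (s_le a 1 1) with (1 <=? 1 + a)%Z. pose proof (phi_tail_two N a).
      destruct (Z.leb_spec 1 (1 + a)), (Z.leb_spec 0 a); cbn [INR]; lia || lra.
    + change (s_le a 2 1) with (1 <=? 1 + a)%Z. pose proof (phi_tail_one N a).
      destruct (Z.leb_spec 1 (1 + a)), (Z.leb_spec 0 a); cbn [INR]; lia || lra.
  - rewrite Nat.pow_succ_r' in *; change (2 ^ S L) with (2 * 2 ^ L).
    pose proof (Nat.pow_nonzero 2 L ltac:(lia)).
    destruct (Nat.Even_or_Odd t) as [[u ->]|[u ->]].
    + rewrite (count_upto_double _ (fun m => s_le a (2 ^ L + m + u) (2 ^ L + m))
                 (fun m => s_le a (2 ^ L + m + u) (2 ^ L + m))), plus_INR
        by (intros; first [apply s_le_double; lia | apply s_le_succ_double; lia]).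
      replace (2 * (2 * 2 ^ L) - 2 * u)%nat with (2 * (2 * 2 ^ L - u))%nat by lia.
      rewrite phi_tail_double by lia.
      pose proof (IH u a ltac:(lia)). lra.
    + rewrite (count_upto_double _ (fun m => s_le (a - 1) (2 ^ L + m + u) (2 ^ L + m))
                 (fun m => s_le (a + 1) (2 ^ L + m + (u + 1)) (2 ^ L + m))), plus_INR
        by (intros; first [apply s_le_succ_double_double; lia | apply s_le_double_succ_double; lia]).
      replace (2 * (2 * 2 ^ L) - (2 * u + 1))%nat with (2 * (2 * 2 ^ L - (u + 1)) + 1)%nat by lia.
      rewrite phi_tail_succ_double by lia.
      replace (S (2 * 2 ^ L - (u + 1))) with (2 * 2 ^ L - u)%nat by lia.
      pose proof (IH u (a - 1)%Z ltac:(lia)). pose proof (IH (u + 1)%nat (a + 1)%Z ltac:(lia)).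
      lra.
Qed.

Lemma INR_pow2 L : INR (2 ^ L) = 2 ^ L.
Proof. rewrite pow_INR; reflexivity. Qed.

Section Frequencies.

Hypothesis p_ge_half : forall t : nat, (1 <= t)%nat -> p t >= 1 / 2.

Lemma freq_ge_pred_pow2 t L : (t <= 2 ^ L)%nat -> 1 / 2 <= freq (ge_pred t) (2 ^ L).
Proof.
  intros Ht. pose proof (Nat.pow_nonzero 2 L ltac:(lia)).
  pose proof (p_ge_half (2 * 2 ^ L + t) ltac:(lia)).
  pose proof (pow_lt 2 L ltac:(lra)).
  unfold freq. rewrite INR_pow2. apply (Rle_div_r (1 / 2)); [lra|].
  rewrite (count_upto_ext _ (fun m => s_le 0 m (m + t))).
  - pose proof (count_s_le_lb L t 0 (2 * 2 ^ L + t) Ht) as Hcount.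
    rewrite <- p_eq_phi_tail in Hcount. nra.
  - intros i _. unfold ge_pred, s_le.
    apply Bool.eq_iff_eq_true. rewrite Nat.leb_le, Z.leb_le. lia.
Qed.

Lemma count_gt_pred_pow2_succ t L : (t <= 2 ^ L)%nat ->
  INR (count_upto (gt_pred t) (2 ^ S L))
  <= INR (count_upto (gt_pred t) (2 ^ L)) + 2 ^ L / 2.
Proof.
  intros Ht. pose proof (Nat.pow_nonzero 2 L ltac:(lia)).
  pose proof (p_ge_half (2 * 2 ^ L - t) ltac:(lia)).
  pose proof (pow_lt 2 L ltac:(lra)).
  replace (2 ^ S L)%nat with (2 ^ L + 2 ^ L)%nat by (rewrite Nat.pow_succ_r'; lia).
  rewrite count_upto_add, plus_INR.
  pose proof (count_upto_negb (fun i => gt_pred t (2 ^ L + i)) (2 ^ L)) as Hsplit.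
  rewrite (count_upto_ext (fun i => negb (gt_pred t (2 ^ L + i)))
             (fun m => s_le 0 (2 ^ L + m + t) (2 ^ L + m))) in Hsplit.
  - apply (f_equal INR) in Hsplit. rewrite plus_INR, INR_pow2 in Hsplit.
    pose proof (count_s_le_block_lb L t 0 (2 * 2 ^ L - t) Ht) as Hcount.
    rewrite <- p_eq_phi_tail in Hcount. nra.
  - intros i _. unfold gt_pred, s_le.
    apply Bool.eq_iff_eq_true. rewrite Bool.negb_true_iff, Nat.ltb_ge, Z.leb_le. lia.
Qed.

Lemma freq_gt_pred_pow2_succ t L : (t <= 2 ^ L)%nat ->
  freq (gt_pred t) (2 ^ S L) <= freq (gt_pred t) (2 ^ L) / 2 + / 4.
Proof.
  intros Ht. pose proof (count_gt_pred_pow2_succ t L Ht).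
  pose proof (pow_lt 2 L ltac:(lra)).
  unfold freq. rewrite !INR_pow2. cbn [pow].
  apply Rle_div_l; [lra|]. field_simplify; [|lra].
  apply Rle_div_r; [lra|]. lra.
Qed.

End Frequencies.

Lemma is_lim_seq_pow2 (u : nat -> R) (l : Rbar) K :
  is_lim_seq u l -> is_lim_seq (fun n => u (2 ^ (K + n))%nat) l.
Proof.
  apply is_lim_seq_subseq, eventually_subseq. intros n.
  rewrite Nat.add_succ_r, Nat.pow_succ_r'.
  pose proof (Nat.pow_nonzero 2 (K + n) ltac:(lia)). lia.
Qed.

Lemma lim_ge_of_pow2 (u : nat -> R) (l c : R) K :
  is_lim_seq u l -> (forall n, c <= u (2 ^ (K + n))%nat) -> c <= l.
Proof.
  intros Hl Hc.
  exact (is_lim_seq_le _ _ c l Hc (is_lim_seq_const c) (is_lim_seq_pow2 u l K Hl)).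
Qed.

Lemma lim_le_of_pow2_halving (u : nat -> R) (l : R) K :
  is_lim_seq u l ->
  (forall n, u (2 ^ S (K + n))%nat <= u (2 ^ (K + n))%nat / 2 + / 4) -> l <= 1 / 2.
Proof.
  intros Hl Hu.
  assert (Hhalf : is_lim_seq (fun n => u (2 ^ (K + n))%nat / 2 + / 4) (l / 2 + / 4)).
  { apply is_lim_seq_plus'; [|apply is_lim_seq_const].
    exact (is_lim_seq_scal_r _ (/ 2) l (is_lim_seq_pow2 u l K Hl)). }
  pose proof (is_lim_seq_le _ _ l _ Hu (is_lim_seq_pow2 u l (S K) Hl) Hhalf) as Hle.
  cbn in Hle. lra.
Qed.

Theorem lemma3p2 :
  (forall t : nat, (1 <= t)%nat -> p t >= 1 / 2) ->
  forall t : nat, (1 <= t)%nat ->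
    (forall ct : R, is_lim_seq (freq (gt_pred t)) ct -> ct <= 1 / 2) /\
    (forall c : R, is_lim_seq (freq (ge_pred t)) c -> 1 / 2 <= c).
Proof.
  intros p_ge_half t _.
  assert (Ht : forall n, (t <= 2 ^ (t + n))%nat).
  { intros n. pose proof (Nat.pow_gt_lin_r 2 (t + n) ltac:(lia)). lia. }
  split.
  - intros ct Hlim. apply (lim_le_of_pow2_halving _ ct t Hlim).
    intros n. exact (freq_gt_pred_pow2_succ p_ge_half t (t + n) (Ht n)).
  - intros c Hlim. apply (lim_ge_of_pow2 _ c _ t Hlim).
    intros n. exact (freq_ge_pred_pow2 p_ge_half t (t + n) (Ht n)).
Qed.
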